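(* Let $G$ be a simple graph with $v$ vertices and $|E|$ edges, let $p_0$ be the number of connected components of $G$, $p_0^{bi}$ the number of bipartite connected components of $G$, and $p_1=|E|-v+p_0$ the cyclomatic number of $G$. Then (0) $H^{0,v-1}_{\mathcal A_2}(G)\cong\mathbb Z^{p_0^{bi}}$; (1) $H^{1,v-1}_{\mathcal A_2}(G)\cong\mathbb Z^{p_1-(p_0-p_0^{bi})}\oplus\mathbb Z_2^{p_0-p_0^{bi}}$.
   Context: For $m\ge 2$ let $\mathcal A_m=\mathbb Z[x]/(x^m)$. For a finite graph $G$ with vertex set $V(G)$, edge set $E(G)$ (with a fixed total order), and $s\subseteq E(G)$, let $[G:s]$ be the spanning subgraph with edge set $s$. An enhanced state is a pair $(s,c)$ where $s\subseteq E(G)$ and $c$ assigns to each component $C$ of $[G:s]$ an exponent $c(C)\in\{0,\dots,m-1\}$ (weight $x^{c(C)}$); its bidegree is $(|s|,\sum_C c(C))$. $C^{i,j}_{\mathcal A_m}(G)$ is the free abelian group on enhanced states of bidegree $(i,j)$. The differential is $d=\sum_{e\notin s}(-1)^{|\{f\in s:f<e\}|}d_e$, where $d_e(s,c)$ is the enhanced state on $s\cup\{e\}$ obtained, if $e$ joins distinct components $C_1,C_2$, by giving the merged component the weight $x^{c(C_1)}x^{c(C_2)}\in\mathcal A_m$ (zero if the exponent sum is $\ge m$) and keeping other weights, and, if $e$ has both endpoints in one component, by keeping all weights (identity). $H^{i,j}_{\mathcal A_m}(G)$ is the resulting cohomology. *)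

(* Chromatic cohomology over A_M = Z[x]/(x^M). *)
From HB Require Import structures.
From mathcomp Require Import all_boot all_order all_algebra.
Set Implicit Arguments.
Unset Strict Implicit.
Unset Printing Implicit Defensive.
Import GRing.Theory.
Local Open Scope ring_scope.

Section Chromatic.
(* A graph with vertex type T and m edges indexed by 'I_m (the edge order is
   the order of 'I_m); edge k has endpoints src k and tgt k. *)
Variables (T : finType) (m : nat) (src tgt : 'I_m -> T).

Definition adj (s : {set 'I_m}) : rel T := fun x y =>
  [exists k in s, ((src k == x) && (tgt k == y)) || ((src k == y) && (tgt k == x))].

Definition components (s : {set 'I_m}) : {set {set T}} :=
  equivalence_partition (connect (adj s)) [set: T].

Variable M : nat.

(* raw pair (s, c), c : components -> exponents in {0..M-1} *)
Definition pstate := ({set 'I_m} * {ffun {set T} -> 'I_M})%type.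
(* c is only meaningful on components of [G:s]; it is normalized to 0 elsewhere *)
Definition is_state (p : pstate) : bool :=
  [forall X : {set T}, (X \notin components p.1) ==> (val (p.2 X) == 0%N)].
Definition state := {p : pstate | is_state p}.

Definition deg_i (t : state) : nat := #|(val t).1|.
Definition deg_j (t : state) : nat :=
  (\sum_(C in components (val t).1) val ((val t).2 C))%N.

Notation chain := {ffun state -> int}.

(* the enhanced state d_e(s,c), or None when it is zero *)
Definition de_target (p : pstate) (e : 'I_m) : option pstate :=
  let s := p.1 in let c := p.2 in
  let C1 := pblock (components s) (src e) in
  let C2 := pblock (components s) (tgt e) in
  let s' := e |: s in
  if C1 == C2 then Some (s', c)
  else match insub (val (c C1) + val (c C2))%N : option 'I_M with
       | Some o =>
           let z : 'I_M := Ordinal (leq_ltn_trans (leq0n o) (ltn_ord o)) in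
           Some (s', [ffun X => if X == C1 :|: C2 then o
                               else if X \in components s' then c X else z])
       | None => None
       end.

Definition d_e (t : state) (e : 'I_m) : chain :=
  match de_target (val t) e with
  | Some p => [ffun u : state => ((val u == p) : nat)%:Z]
  | None => 0
  end.

Definition dbasis (t : state) : chain :=
  \sum_(e in ~: (val t).1)
     d_e t e *~ ((-1) ^+ #|[set f in (val t).1 | (f < e)%N]| : int).

Definition diff (f : chain) : chain := \sum_(t : state) dbasis t *~ f t.

Definition in_bideg (i : nat) (j : int) (f : chain) : Prop :=
  forall t, f t != 0 -> deg_i t = i /\ (deg_j t)%:Z = j.
Definition cocycle (i : nat) (j : int) (f : chain) : Prop :=
  in_bideg i j f /\ diff f = 0.
(* image of d : C^{i-1,j} -> C^{i,j} (zero when i = 0) *)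
Definition coboundary (i : nat) (j : int) (f : chain) : Prop :=
  exists g : chain,
    (forall t, g t != 0 -> (deg_i t).+1 = i /\ (deg_j t)%:Z = j) /\ f = diff g.

(* H^{i,j}_{A_M}(G) = cocycles / coboundaries is isomorphic to A:
   there is a surjective group homomorphism from the cocycles onto A
   whose kernel is exactly the coboundaries. *)
Definition cohom_iso (i : nat) (j : int) (A : zmodType) : Prop :=
  exists phi : chain -> A,
    [/\ (forall f g, cocycle i j f -> cocycle i j g -> phi (f + g) = phi f + phi g),
        (forall a, exists f, cocycle i j f /\ phi f = a) &
        (forall f, cocycle i j f -> (phi f = 0 <-> coboundary i j f))].

End Chromatic.

Section Invariants.
Variables (T : finType) (m : nat) (src tgt : 'I_m -> T).

Definition graph_components : {set {set T}} := components src tgt [set: 'I_m].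
Definition p0 : nat := #|graph_components|.
Definition bipartite (C : {set T}) : bool :=
  [exists f : {ffun T -> bool},
     [forall k : 'I_m, (src k \in C) ==> (f (src k) != f (tgt k))]].
Definition p0bi : nat := #|[set C in graph_components | bipartite C]|.
(* cyclomatic number |E| - v + p0 (nonnegative) *)
Definition p1 : nat := (m + p0 - #|T|)%N.
End Invariants.

From mathcomp Require Import all_boot all_order all_algebra.
From mathcomp Require Import zify ring.
Import GRing.Theory.
Local Open Scope ring_scope.
Set Implicit Arguments. Unset Strict Implicit. Unset Printing Implicit Defensive.

(* In bidegree (i, v - 1) over A_2 the complex is tiny.  A state on no edge
   has v singleton components whose exponents sum to v - 1, so exactly one
   vertex u has weight 1 and all others weight x; a state on one edge k has
   weight x on each of its v - 1 components; there is no state on two edges.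
   As G is simple, a second edge always merges two components of weight x,
   so d vanishes in degree 1, while d sends the state of u to the sum of the
   states of the edges at u.  Thus H^0 and H^1 are the kernel and cokernel of
   the unsigned incidence map a |-> (a (src k) + a (tgt k))_k from Z^V to Z^E.

   Fix a breadth-first spanning forest.  An element of the kernel is
   determined by its values c_r at the roots: it is (-1)^depth * c_r on the
   component of r, which is consistent iff that component is bipartite.  For
   the cokernel, subtracting the image of the tree solution reduces every b to
   the non-tree edges, where the image becomes spanned, component by
   component, by 2 h with h (k) = +-1 on edges joining vertices of equal depth
   parity and 0 elsewhere; h vanishes iff the component is bipartite.  One
   chosen edge with h (k) != 0 per non-bipartite component yields a Z/2
   summand, and the remaining p1 - (p0 - p0bi) non-tree edges stay free. *)

Section SetEnum.
Variables (U : finType) (S : {set U}) (n : nat) (cardS : #|S| = n).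

Definition set_enum (i : 'I_n) : U := enum_val (cast_ord (esym cardS) i).

Lemma set_enum_mem i : set_enum i \in S.
Proof. exact: enum_valP. Qed.

Lemma set_enum_inj : injective set_enum.
Proof. by move=> i j /enum_val_inj /cast_ord_inj. Qed.

Lemma set_enum_onto x : x \in S -> exists i, set_enum i = x.
Proof.
move=> xS; exists (cast_ord cardS (enum_rank_in xS x)).
by rewrite /set_enum cast_ordK enum_rankK_in.
Qed.

End SetEnum.

Section ExtendByZero.
Variables (I : finType) (U : eqType) (R : zmodType) (e : I -> U).

Definition extend0 (v : I -> R) (x : U) : R :=
  if [pick i | e i == x] is Some i then v i else 0.

Lemma extend0_out v x : (forall i, e i != x) -> extend0 v x = 0.
Proof. by move=> ex; rewrite /extend0; case: pickP => // i; rewrite (negbTE (ex i)). Qed.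

Lemma extend0_supp v x : extend0 v x != 0 -> exists i, e i = x.
Proof. by rewrite /extend0; case: pickP => [i /eqP <- _|]; [exists i | rewrite eqxx]. Qed.

Hypothesis e_inj : injective e.

Lemma extend0E v i : extend0 v (e i) = v i.
Proof.
by rewrite /extend0; case: pickP => [j /eqP/e_inj -> //|/(_ i)]; rewrite eqxx.
Qed.

Lemma extend0_restrict (f : U -> R) :
  (forall x, f x != 0 -> exists i, e i = x) -> f =1 extend0 (f \o e).
Proof.
move=> suppf x; have [/suppf[i <-]|/negPn/eqP fx0] := boolP (f x != 0).
  by rewrite extend0E.
by rewrite /extend0; case: pickP => // i /eqP eix; rewrite /= eix.
Qed.

End ExtendByZero.

Lemma intr_Z2_eq0 (z : int) : (z%:~R : 'Z_2) = 0 -> z = 2 * (z %/ 2)%Z.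
Proof.
have two0 : (2%:~R : 'Z_2) = 0 by apply/eqP.
have [z_mod_ge0 z_mod_lt2] : 0 <= (z %% 2)%Z /\ (z %% 2)%Z < 2.
  by split; [apply: modz_ge0 | apply: ltz_pmod].
rewrite {1 2}(divz_eq z 2) intrD intrM two0 mulr0 add0r.
have [->|->] : (z %% 2)%Z = 0 \/ (z %% 2)%Z = 1 by lia.
  by rewrite addr0 mulrC.
by move/eqP.
Qed.

Lemma sum_delta_extend0 (I : finType) (U : eqType) (R : pzRingType) (e : I -> U)
    (v : I -> R) w :
  injective e -> \sum_i (w == e i)%:R * v i = extend0 e v w.
Proof.
move=> e_inj; case: (pickP (fun i => e i == w)) => [i /eqP <-|none].
  rewrite extend0E // (bigD1 i) //= eqxx mul1r big1 ?addr0 // => j ji.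
  by rewrite (inj_eq e_inj) eq_sym (negbTE ji) mul0r.
rewrite extend0_out => [|i]; last by rewrite none.
by rewrite big1 // => i _; rewrite eq_sym none mul0r.
Qed.

Lemma reindex_supp (I J : finType) (R : nmodType) (h : I -> J) (F : J -> R) :
  injective h -> (forall t, F t != 0 -> exists u, h u = t) ->
  \sum_t F t = \sum_u F (h u).
Proof.
move=> h_inj suppF; rewrite (bigID (mem (h @: setT))) /= [X in _ + X]big1 ?addr0.
  by rewrite (big_imset _ (in2W h_inj)); apply: eq_bigl => u; rewrite in_setT.
move=> t tn; apply/eqP; apply: contraR tn => /suppF[u <-].
by apply/imsetP; exists u.
Qed.

Lemma sum_le1_eq_card (I : finType) (P : pred I) (F : I -> nat) :
  (forall i, P i -> F i <= 1)%N -> (\sum_(i | P i) F i)%N = #|P| ->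
  forall i, P i -> F i = 1%N.
Proof.
move=> F_le1 sumF; have [_] := leqif_sum (fun i Pi => leqif_eq (F_le1 i Pi)).
by rewrite sum1_card sumF eqxx => /esym/forall_inP all1 i /all1/eqP.
Qed.

Lemma Posz_eq_subr1 (n N : nat) : n%:Z = N%:Z - 1 <-> n.+1 = N.
Proof. by split=> ?; lia. Qed.

Section Adjacency.
Variables (T : finType) (m : nat) (src tgt : 'I_m -> T).

Lemma adj_sym s : symmetric (adj src tgt s).
Proof. by move=> x y; apply/existsP/existsP => -[k /andP[ks e]]; exists k; rewrite ks orbC. Qed.

Lemma connect_adj_sym s : connect_sym (adj src tgt s).
Proof. exact/sym_connect_sym/adj_sym. Qed.

End Adjacency.

(** * A breadth-first spanning forest *)

Section IncidenceForest.
Variables (T : finType) (m : nat) (src tgt : 'I_m -> T).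
Hypothesis src_neq_tgt : forall k, src k != tgt k.

Local Notation gadj := (adj src tgt [set: 'I_m]).

Lemma gadjP x y :
  reflect (exists k, ((src k == x) && (tgt k == y)) || ((src k == y) && (tgt k == x)))
          (gadj x y).
Proof.
by apply: (iffP existsP) => -[k e]; exists k; rewrite ?in_setT //; case/andP: e.
Qed.

Lemma gadj_edge k : gadj (src k) (tgt k).
Proof. by apply/gadjP; exists k; rewrite !eqxx. Qed.

Definition croot x := fingraph.root gadj x.

Lemma connect_croot x y : connect gadj x y = (croot x == croot y).
Proof. by rewrite /croot fingraph.root_connect //; apply: connect_adj_sym. Qed.

Lemma croot_id x : croot (croot x) = croot x.
Proof. by rewrite /croot fingraph.root_root //; apply: connect_adj_sym. Qed.

Lemma croot_tgt k : croot (tgt k) = croot (src k).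
Proof. by apply/esym/eqP; rewrite -connect_croot connect1 ?gadj_edge. Qed.

Fixpoint walk n x y : bool :=
  if n is n'.+1 then [exists z, walk n' x z && gadj z y] else x == y.

Lemma walk_cons n x z y : gadj x z -> walk n z y -> walk n.+1 x y.
Proof.
elim: n x z y => [|n IHn] x z y /= exz; first by move/eqP <-; apply/existsP; exists x; rewrite eqxx.
case/existsP=> w /andP[zw wy]; apply/existsP; exists w; rewrite wy andbT.
exact: IHn exz zw.
Qed.

Lemma connect_walk x y : connect gadj x y -> exists n, walk n x y.
Proof.
case/connectP=> p + ->; elim: p x => [|z p IHp] x /=; first by exists 0%N => /=.
by case/andP=> xz /IHp[n zy]; exists n.+1; apply: walk_cons xz zy.
Qed.

Lemma exists_walk_from_croot x : exists n, walk n (croot x) x.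
Proof. by apply: connect_walk; rewrite connect_croot croot_id. Qed.

Definition depth x := ex_minn (exists_walk_from_croot x).

Lemma depth_walk x : walk (depth x) (croot x) x.
Proof. by rewrite /depth; case: ex_minnP. Qed.

Lemma depth_min x n : walk n (croot x) x -> (depth x <= n)%N.
Proof. by rewrite /depth; case: ex_minnP => d _ dmin /dmin. Qed.

Lemma depth_eq0 x : (depth x == 0%N) = (croot x == x).
Proof.
apply/eqP/eqP => [d0|rx]; first by have := depth_walk x; rewrite d0 => /eqP.
by apply/eqP; rewrite -leqn0 depth_min //= rx.
Qed.

Lemma depthS x n : depth x = n.+1 -> exists2 y, gadj y x & depth y = n.
Proof.
move=> dx; have := depth_walk x; rewrite dx /= => /existsP[y /andP[wy yx]].
exists y => //; have ry : croot y = croot x by apply/eqP; rewrite -connect_croot connect1.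
apply/eqP; rewrite eqn_leq depth_min ?ry //= -ltnS -dx depth_min //=.
by apply/existsP; exists y; rewrite yx andbT -ry depth_walk.
Qed.

Definition incident k x := (src k == x) || (tgt k == x).
Definition other_end k x := if src k == x then tgt k else src k.

Lemma gadj_other_end k x : incident k x -> gadj x (other_end k x).
Proof.
rewrite /incident /other_end; case: eqP => [<- _|_ /= /eqP <-]; first exact: gadj_edge.
by rewrite adj_sym gadj_edge.
Qed.

Lemma croot_other_end k x : incident k x -> croot (other_end k x) = croot x.
Proof. by move/gadj_other_end/connect1; rewrite connect_croot => /eqP. Qed.

Lemma croot_incident k x : incident k x -> croot (src k) = croot x.
Proof. by case/orP=> /eqP <- //; rewrite croot_tgt. Qed.

Lemma sum_ends_other_end (R : nmodType) (a : T -> R) k x :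
  incident k x -> a (src k) + a (tgt k) = a x + a (other_end k x).
Proof. by rewrite /incident /other_end; case: eqP => [<-|_ /= /eqP <-] //; rewrite addrC. Qed.

Definition parent_edge x : option 'I_m :=
  [pick k | incident k x && ((depth (other_end k x)).+1 == depth x)].

Lemma parent_edge_some x k : parent_edge x = Some k ->
  incident k x /\ (depth (other_end k x)).+1 = depth x.
Proof. by rewrite /parent_edge; case: pickP => // k' /andP[kx /eqP dk] [<-]. Qed.

Lemma parent_edge_none x : parent_edge x = None -> depth x = 0%N.
Proof.
rewrite /parent_edge; case: pickP => // noparent _.
case dx: (depth x) => [|n] //; have [y /gadjP[k yx] dy] := depthS dx.
have yx_neq : y != x by apply: contraTneq isT => y_x; move: dy; rewrite y_x dx; lia.
suff [kx ky] : incident k x /\ other_end k x = y by have := noparent k; rewrite kx ky dy dx eqxx.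
rewrite /incident /other_end.
by case/orP: yx => /andP[/eqP-> /eqP->]; rewrite ?eqxx ?orbT ?(negbTE yx_neq).
Qed.

Lemma parent_edge_root x : (parent_edge x == None) = (croot x == x).
Proof.
rewrite -depth_eq0; case px: (parent_edge x) => [k|]; last by rewrite parent_edge_none.
by have [_ <-] := parent_edge_some px.
Qed.

Definition edge_sum (a : T -> int) k : int := a (src k) + a (tgt k).

Fixpoint tree_sol_rec (b : 'I_m -> int) n x : int :=
  if n is n'.+1 then
    if parent_edge x is Some k then b k - tree_sol_rec b n' (other_end k x) else 0
  else 0.

(* The solution of [edge_sum a = b] on tree edges that vanishes at the roots. *)
Definition tree_sol b x := tree_sol_rec b (depth x) x.

Lemma tree_solE b x :
  tree_sol b x = if parent_edge x is Some k then b k - tree_sol b (other_end k x) else 0.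
Proof.
rewrite /tree_sol; case px: (parent_edge x) => [k|]; last by rewrite parent_edge_none.
by have [_ <-] := parent_edge_some px; rewrite /= px.
Qed.

Lemma tree_sol_parent b x k : parent_edge x = Some k ->
  b k = tree_sol b x + tree_sol b (other_end k x).
Proof. by move=> px; rewrite tree_solE px subrK. Qed.

Lemma eq_tree_sol b b' : b =1 b' -> tree_sol b =1 tree_sol b'.
Proof.
move=> eqb x; rewrite /tree_sol; move: (depth x) => n; elim: n x => //= n IHn x.
by case: (parent_edge x) => // k; rewrite IHn eqb.
Qed.

Lemma tree_solD b b' x : tree_sol (fun k => b k + b' k) x = tree_sol b x + tree_sol b' x.
Proof.
rewrite /tree_sol; move: (depth x) => n; elim: n x => /= [|n IHn] x; first by rewrite addr0.
by case: (parent_edge x) => [k|]; rewrite ?addr0 // IHn opprD addrACA.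
Qed.

Lemma tree_sol_eq0 b : (forall x k, parent_edge x = Some k -> b k = 0) ->
  forall x, tree_sol b x = 0.
Proof.
move=> b0 x; rewrite /tree_sol; move: (depth x) => n; elim: n x => //= n IHn x.
by case px: (parent_edge x) => [k|] //; rewrite IHn (b0 _ _ px) subr0.
Qed.

Definition dsign x : int := (-1) ^+ depth x.

Definition odd_sign k : int :=
  if odd (depth (src k)) == odd (depth (tgt k)) then dsign (src k) else 0.

Lemma dsign_edge k : dsign (src k) + dsign (tgt k) = 2 * odd_sign k.
Proof.
rewrite /odd_sign /dsign -!(signr_odd _ (depth _)).
by case: (odd (depth (src k))); case: (odd (depth (tgt k))).
Qed.

Lemma odd_sign_eq0 k : (odd_sign k == 0) = (odd (depth (src k)) != odd (depth (tgt k))).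
Proof. by rewrite /odd_sign /dsign; case: ifP => /= _; rewrite ?eqxx ?signr_eq0. Qed.

Lemma odd_sign_sqr k : odd_sign k != 0 -> odd_sign k * odd_sign k = 1.
Proof.
by rewrite /odd_sign /dsign; case: ifP; rewrite ?eqxx // -expr2 sqrr_sign.
Qed.

Lemma tree_sol_edge_sum a x : a x = tree_sol (edge_sum a) x + dsign x * a (croot x).
Proof.
move: {2}(depth x) (erefl (depth x)) => n; elim: n x => [|n IHn] x dx; rewrite tree_solE.
  have /eqP rx : croot x == x by rewrite -depth_eq0 dx.
  have /eqP -> : parent_edge x == None by rewrite parent_edge_root rx.
  by rewrite /dsign dx rx add0r mul1r.
case px: (parent_edge x) => [k|]; last by rewrite parent_edge_none in dx.
have [kx] := parent_edge_some px; rewrite dx => -[dy].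
rewrite {1}/edge_sum (sum_ends_other_end a kx) (IHn _ dy) (croot_other_end kx) /dsign dx dy exprS.
ring.
Qed.

Definition tree_edge k := [exists x, parent_edge x == Some k].

Lemma odd_sign_tree k : tree_edge k -> odd_sign k = 0.
Proof.
case/existsP=> x /eqP px; have [kx dk] := parent_edge_some px.
apply/eqP; rewrite odd_sign_eq0; move: kx dk; rewrite /incident /other_end.
by case: eqP => [<- _|_ /= /eqP <-] <- /=; case: odd.
Qed.

Definition comp_of x := [set y | connect gadj x y].

Definition even_comp r := [forall k, (croot (src k) == r) ==> (odd_sign k == 0)].

Lemma mem_comp_of r y : (y \in comp_of r) = (croot r == croot y).
Proof. by rewrite inE connect_croot. Qed.

Lemma proper_coloring_parity (f : {ffun T -> bool}) r : croot r = r ->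
  [forall k, (src k \in comp_of r) ==> (f (src k) != f (tgt k))] ->
  forall y, croot y = r -> f y = f r (+) odd (depth y).
Proof.
move=> rr /forallP proper y; move: {2}(depth y) (erefl (depth y)) => n.
elim: n y => [|n IHn] y dy ry.
  have /eqP yr : croot y == y by rewrite -depth_eq0 dy.
  by rewrite dy addbF -ry yr.
case py: (parent_edge y) => [k|]; last by rewrite parent_edge_none in dy.
have [ky] := parent_edge_some py; rewrite dy => -[dz].
have kr : src k \in comp_of r by rewrite mem_comp_of rr (croot_incident ky) ry.
have fz : f (other_end k y) = f r (+) odd n.
  by rewrite -dz; apply: IHn; rewrite ?croot_other_end.
have : f y != f (other_end k y).
  move: ky (implyP (proper k) kr); rewrite /incident /other_end.
  by case: (src k =P y) => [<- _|_ /= /eqP <-]; rewrite ?eqxx ?(negbTE (src_neq_tgt k)) // eq_sym.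
by rewrite fz /=; case: (f y); case: (f r); case: (odd n).
Qed.

Lemma bipartite_comp r : croot r = r -> bipartite src tgt (comp_of r) = even_comp r.
Proof.
move=> rr; apply/existsP/forallP => [[f proper] k|even].
  apply/implyP => /eqP kr.
  have kr' : src k \in comp_of r by rewrite mem_comp_of rr kr.
  have parity := proper_coloring_parity rr proper.
  move: (implyP (forallP proper k) kr').
  rewrite (parity _ kr) (parity (tgt k)) ?croot_tgt // odd_sign_eq0.
  by case: (f r); case: odd; case: odd.
exists [ffun y => odd (depth y)]; apply/forallP => k; apply/implyP.
rewrite mem_comp_of rr eq_sym !ffunE -odd_sign_eq0.
exact: implyP (even k).
Qed.

Definition comp_roots := [set x | croot x == x].
Definition even_roots := [set x in comp_roots | even_comp x].
Definition odd_roots := [set x in comp_roots | ~~ even_comp x].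

Lemma comp_of_inj : {in comp_roots &, injective comp_of}.
Proof.
move=> x y; rewrite !inE => /eqP rx /eqP ry exy.
have : y \in comp_of x by rewrite exy mem_comp_of eqxx.
by rewrite mem_comp_of rx ry => /eqP.
Qed.

Lemma graph_componentsE : graph_components src tgt = comp_of @: comp_roots.
Proof.
rewrite /graph_components /components /equivalence_partition.
apply/setP=> C; apply/imsetP/imsetP => -[x _ ->].
  exists (croot x); first by rewrite inE croot_id.
  by apply/setP=> y; rewrite !inE !connect_croot croot_id.
by exists x => //; apply/setP=> y; rewrite !inE.
Qed.

Lemma card_comp_roots : #|comp_roots| = p0 src tgt.
Proof. by rewrite /p0 graph_componentsE card_in_imset //; apply: comp_of_inj. Qed.

Lemma card_even_roots : #|even_roots| = p0bi src tgt.
Proof.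
rewrite /p0bi.
have -> : [set C in graph_components src tgt | bipartite src tgt C] = comp_of @: even_roots.
  apply/setP=> C; rewrite inE graph_componentsE.
  apply/andP/imsetP => [[/imsetP[x xR ->]]|[x]].
    move: (xR); rewrite inE => /eqP rx; rewrite bipartite_comp // => ex.
    by exists x; rewrite // inE xR.
  rewrite inE => /andP[xR ex] ->; split; first by apply/imsetP; exists x.
  by move: xR; rewrite inE => /eqP rx; rewrite bipartite_comp.
rewrite card_in_imset // => x y; rewrite !inE => /andP[xR _] /andP[yR _].
by apply: comp_of_inj; rewrite inE.
Qed.

Lemma card_odd_roots : #|odd_roots| = (p0 src tgt - p0bi src tgt)%N.
Proof.
rewrite -card_comp_roots -card_even_roots -(cardsID [set x | even_comp x] comp_roots).
have -> : comp_roots :&: [set x | even_comp x] = even_roots by apply/setP=> x; rewrite !inE.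
have -> : comp_roots :\: [set x | even_comp x] = odd_roots by apply/setP=> x; rewrite !inE andbC.
by rewrite addKn.
Qed.

Definition odd_edge r : option 'I_m := [pick k | (croot (src k) == r) && (odd_sign k != 0)].

Lemma odd_edge_some r k : odd_edge r = Some k -> croot (src k) = r /\ odd_sign k != 0.
Proof. by rewrite /odd_edge; case: pickP => // k' /andP[/eqP kr ok] [<-]. Qed.

Lemma odd_edge_none r k : odd_edge r = None -> croot (src k) = r -> odd_sign k = 0.
Proof.
rewrite /odd_edge; case: pickP => // noedge _ kr.
by move: (noedge k); rewrite kr eqxx => /negbFE/eqP.
Qed.

Lemma even_compE r : even_comp r = (odd_edge r == None).
Proof.
case or: (odd_edge r) => [k|] /=.
  have [kr ok] := odd_edge_some or; apply/negbTE/negP => /forallP/(_ k).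
  by rewrite kr eqxx (negbTE ok).
by apply/forallP=> k; apply/implyP=> /eqP kr; rewrite (odd_edge_none or kr).
Qed.

Definition odd_edges := [set k | odd_edge (croot (src k)) == Some k].

Lemma card_odd_edges : #|odd_edges| = (p0 src tgt - p0bi src tgt)%N.
Proof.
rewrite -card_odd_roots.
have -> : odd_roots = (fun k => croot (src k)) @: odd_edges.
  apply/setP=> r; rewrite !inE even_compE; apply/andP/imsetP => [[rR]|[k]].
    case or: (odd_edge r) => [k|] // _; have [kr _] := odd_edge_some or.
    by exists k; rewrite // inE kr or.
  by rewrite inE => /eqP ok ->; rewrite croot_id ok eqxx.
rewrite card_in_imset // => k k'; rewrite !inE => /eqP ok /eqP ok' e.
by move: ok; rewrite e ok' => -[].
Qed.

Definition tree_edges := [set k | tree_edge k].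

Definition tree_child k := if parent_edge (src k) == Some k then src k else tgt k.

Lemma tree_child_parent x k : parent_edge x = Some k -> tree_child k = x.
Proof.
move=> px; have [kx dkx] := parent_edge_some px; rewrite /tree_child.
have [ps|] := eqVneq (parent_edge (src k)) (Some k); last first.
  by case/orP: kx => /eqP kx //; rewrite kx px eqxx.
case/orP: kx => /eqP kx //; have [_ dks] := parent_edge_some ps.
move: dkx dks; rewrite /other_end -kx eqxx (negbTE (src_neq_tgt k)) => <-.
rewrite kx; lia.
Qed.

Lemma card_tree_edges : #|tree_edges| = (#|T| - #|comp_roots|)%N.
Proof.
have -> : (#|T| - #|comp_roots| = #|~: comp_roots|)%N by rewrite -(cardsC comp_roots) addKn.
have -> : ~: comp_roots = tree_child @: tree_edges.
  apply/setP=> x; rewrite !inE -parent_edge_root; apply/idP/imsetP => [|[k]].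
    case px: (parent_edge x) => [k|] // _.
    by exists k; rewrite ?(tree_child_parent px) // inE; apply/existsP; exists x; rewrite px.
  by rewrite inE => /existsP[y /eqP py] ->; rewrite (tree_child_parent py) py.
rewrite card_in_imset // => k k'; rewrite !inE => /existsP[x /eqP px] /existsP[x' /eqP px'].
by rewrite (tree_child_parent px) (tree_child_parent px') => xx'; move: px; rewrite xx' px' => -[].
Qed.

Lemma odd_edge_not_tree k : k \in odd_edges -> ~~ tree_edge k.
Proof.
rewrite inE => /eqP /odd_edge_some[_ ok]; apply: contra ok => /odd_sign_tree ->.
by rewrite eqxx.
Qed.

Definition free_edges := [set k | ~~ tree_edge k && (k \notin odd_edges)].

Lemma card_free_edges :
  #|free_edges| = (p1 src tgt - (p0 src tgt - p0bi src tgt))%N.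
Proof.
have -> : free_edges = ~: (tree_edges :|: odd_edges) by apply/setP=> k; rewrite !inE negb_or.
have disj : tree_edges :&: odd_edges = set0.
  apply/setP=> k; rewrite in_set0; apply/negbTE/setIP => -[].
  by rewrite inE => tk /odd_edge_not_tree; rewrite tk.
have := cardsC (tree_edges :|: odd_edges); have := max_card comp_roots.
rewrite cardsU disj cards0 subn0 card_ord card_tree_edges card_odd_edges.
rewrite /p1 -card_comp_roots; lia.
Qed.

(** * Kernel and cokernel of the unsigned incidence map *)

Local Notation nfree := (p1 src tgt - (p0 src tgt - p0bi src tgt))%N.
Local Notation nodd := (p0 src tgt - p0bi src tgt)%N.
Local Notation neven := (p0bi src tgt).
Local Notation coker := ('rV[int]_nfree * 'rV['Z_2]_nodd)%type.

Local Notation free_enum := (set_enum card_free_edges).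
Local Notation odd_enum := (set_enum card_odd_edges).
Local Notation even_enum := (set_enum card_even_roots).

Definition reduce b k : int := b k - edge_sum (tree_sol b) k.

(* On a non-bipartite component with chosen odd edge [o], the reduced image of
   [edge_sum] consists of the multiples of [2 * odd_sign]; subtracting the
   correction kills them on the other edges, leaving only the parity at [o]. *)
Definition odd_correction b k : int :=
  if odd_edge (croot (src k)) is Some o then odd_sign k * odd_sign o * reduce b o else 0.

Definition coker_coord b : coker :=
  (\row_i (reduce b (free_enum i) - odd_correction b (free_enum i)),
   \row_j (reduce b (odd_enum j))%:~R).

Lemma eq_coker_coord b b' : b =1 b' -> coker_coord b = coker_coord b'.
Proof.
move=> eqb; have eq_red k : reduce b k = reduce b' k.
  by rewrite /reduce /edge_sum eqb !(eq_tree_sol eqb).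
have eq_corr k : odd_correction b k = odd_correction b' k.
  by rewrite /odd_correction; case: odd_edge => // o; rewrite eq_red.
by congr (_, _); apply/matrixP => i j; rewrite !mxE ?eq_red ?eq_corr.
Qed.

Lemma coker_coordD b b' :
  coker_coord (fun k => b k + b' k) = coker_coord b + coker_coord b'.
Proof.
have redD k : reduce (fun k => b k + b' k) k = reduce b k + reduce b' k.
  by rewrite /reduce /edge_sum !tree_solD; ring.
have corrD k : odd_correction (fun k => b k + b' k) k = odd_correction b k + odd_correction b' k.
  by rewrite /odd_correction; case: odd_edge => [o|]; rewrite ?redD ?addr0 //; ring.
congr (_, _); apply/matrixP => i j; rewrite !mxE ?redD ?corrD ?intrD //; ring.
Qed.

Lemma reduce_tree b k : tree_edge k -> reduce b k = 0.
Proof.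
case/existsP=> x /eqP px; have [kx _] := parent_edge_some px.
by rewrite /reduce /edge_sum (sum_ends_other_end _ kx) (tree_sol_parent b px) subrr.
Qed.

Lemma reduce_edge_sum a k : reduce (edge_sum a) k = 2 * odd_sign k * a (croot (src k)).
Proof.
rewrite /reduce {1}/edge_sum (tree_sol_edge_sum a (src k)) (tree_sol_edge_sum a (tgt k)).
by rewrite croot_tgt -dsign_edge /edge_sum; ring.
Qed.

Lemma odd_edge_mem k o : odd_edge (croot (src k)) = Some o -> o \in odd_edges.
Proof. by move=> ok; have [or _] := odd_edge_some ok; rewrite inE or ok. Qed.

Lemma eq_odd_correction b b' k : {in odd_edges, reduce b =1 reduce b'} ->
  odd_correction b k = odd_correction b' k.
Proof.
move=> eqr; rewrite /odd_correction.
by case ok: odd_edge => [o|] //; rewrite eqr ?(odd_edge_mem ok).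
Qed.

Lemma odd_correction_edge_sum a k : odd_correction (edge_sum a) k = reduce (edge_sum a) k.
Proof.
rewrite /odd_correction !reduce_edge_sum; case ok: odd_edge => [o|].
  have [or /odd_sign_sqr sq] := odd_edge_some ok.
  by rewrite reduce_edge_sum or -[RHS]mulr1 -sq; ring.
by rewrite (odd_edge_none ok) // mulr0 mul0r.
Qed.

Lemma coker_coord_edge_sum a : coker_coord (edge_sum a) = 0.
Proof.
congr (_, _); apply/matrixP => i j; rewrite !mxE ?odd_correction_edge_sum ?subrr //.
by rewrite reduce_edge_sum -mulrA intrM (_ : 2%:~R = 0 :> 'Z_2) ?mul0r //; apply/eqP.
Qed.

Lemma edge_sum_of_reduce b q :
  (forall k, reduce b k = 2 * odd_sign k * q (croot (src k))) ->
  b =1 edge_sum (fun x => tree_sol b x + dsign x * q (croot x)).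
Proof.
move=> red k; have := red k; rewrite /reduce /edge_sum croot_tgt -dsign_edge => bk.
by rewrite -[b k](subrK (tree_sol b (src k) + tree_sol b (tgt k))) bk; ring.
Qed.

Lemma coker_coord_eq0 b : coker_coord b = 0 -> exists a, b =1 edge_sum a.
Proof.
move=> cb0.
have even_odd o : o \in odd_edges -> reduce b o = 2 * (reduce b o %/ 2)%Z.
  case/(set_enum_onto card_odd_edges)=> j <-; apply: intr_Z2_eq0.
  by move: (congr1 (fun c : coker => c.2 0 j) cb0); rewrite /= !mxE.
pose q r := if odd_edge r is Some o then (reduce b o %/ 2)%Z * odd_sign o else 0.
exists (fun x => tree_sol b x + dsign x * q (croot x)); apply: edge_sum_of_reduce => k.
have [tk|ntk] := boolP (tree_edge k).
  by rewrite reduce_tree // odd_sign_tree // !mulr0 mul0r.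
have [ko|nko] := boolP (k \in odd_edges).
  move: (ko); rewrite inE => /eqP ok; rewrite /q ok {1}(even_odd _ ko).
  by have [_ /odd_sign_sqr sq] := odd_edge_some ok; rewrite -[LHS]mul1r -sq; ring.
have [i <-] : exists i, free_enum i = k.
  by apply: (set_enum_onto card_free_edges); rewrite inE ntk.
move: (congr1 (fun c : coker => c.1 0 i) cb0); rewrite /= !mxE /odd_correction /q.
case ok: odd_edge => [o|]; last by move/eqP; rewrite subr0 mulr0 => /eqP.
by move/eqP; rewrite subr_eq0 => /eqP ->; rewrite {1}(even_odd o (odd_edge_mem ok)); ring.
Qed.

Lemma reduce_id b : (forall k, tree_edge k -> b k = 0) -> reduce b =1 b.
Proof.
move=> btree k; have ts0 : forall x, tree_sol b x = 0.
  by apply: tree_sol_eq0 => x k' px; apply: btree; apply/existsP; exists x; rewrite px.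
by rewrite /reduce /edge_sum !ts0 addr0.
Qed.

Lemma coker_coord_onto (y : coker) : exists b, coker_coord b = y.
Proof.
case: y => yF yO.
pose bF := extend0 free_enum (fun i => yF 0 i).
pose bO := extend0 odd_enum (fun j => (yO 0 j : nat)%:Z).
pose b k := bF k + bO k + (if k \in free_edges then odd_correction bO k else 0).
have bF_out k : k \notin free_edges -> bF k = 0.
  by move=> kF; apply: extend0_out => i; apply: contraNneq kF => <-; apply: set_enum_mem.
have bO_out k : k \notin odd_edges -> bO k = 0.
  by move=> kO; apply: extend0_out => i; apply: contraNneq kO => <-; apply: set_enum_mem.
have odd_not_free k : k \in odd_edges -> k \notin free_edges by move=> ko; rewrite inE ko andbF.
have tree_not_odd k : tree_edge k -> k \notin odd_edges by apply: contraTN => /odd_edge_not_tree.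
have tree_not_free k : tree_edge k -> k \notin free_edges by move=> tk; rewrite inE tk.
have red_bO := reduce_id (fun k tk => bO_out k (tree_not_odd k tk)).
have red_b : reduce b =1 b.
  apply: reduce_id => k tk.
  have [kF kO] := (tree_not_free k tk, tree_not_odd k tk).
  by rewrite /b bF_out // bO_out // (negbTE kF) !addr0.
have b_odd o : o \in odd_edges -> b o = bO o.
  by move=> ko; rewrite /b bF_out ?(negbTE (odd_not_free o ko)) ?odd_not_free // add0r addr0.
exists b; congr (_, _); apply/matrixP => i j; rewrite !mxE (ord1 i) red_b.
  have kF := set_enum_mem card_free_edges j.
  rewrite (@eq_odd_correction b bO) => [|o ko]; last by rewrite red_b red_bO b_odd.
  rewrite /b kF bO_out; last by apply: contraTN kF => /odd_not_free.
  by rewrite /bF extend0E ?addr0 ?addrK //; apply: set_enum_inj.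
rewrite b_odd ?set_enum_mem // /bO extend0E; last exact: set_enum_inj.
by rewrite -pmulrn natr_Zp.
Qed.

Definition ker_coord (a : T -> int) : 'rV[int]_neven := \row_i a (even_enum i).

Lemma ker_coord_eq0 a : (forall k, edge_sum a k = 0) -> ker_coord a = 0 -> forall x, a x = 0.
Proof.
move=> a_cyc ka0 x.
have ts0 := tree_sol_eq0 (fun x k _ => a_cyc k).
rewrite (tree_sol_edge_sum a x) ts0 add0r.
have rr : croot x \in comp_roots by rewrite inE croot_id.
case er: (even_comp (croot x)).
  have [i <-] : exists i, even_enum i = croot x.
    by apply: (set_enum_onto card_even_roots); rewrite inE rr er.
  by move: (congr1 (fun c : 'rV[int]_neven => c 0 i) ka0); rewrite !mxE => ->; rewrite mulr0.
move: er; rewrite even_compE; case ok: odd_edge => [o|] // _.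
have [or /negbTE ok0] := odd_edge_some ok.
have : reduce (edge_sum a) o = 0 by rewrite /reduce a_cyc /edge_sum !ts0 subrr.
rewrite reduce_edge_sum or => /eqP; rewrite !mulf_eq0 ok0 orbF.
by case/orP => [//|/eqP ->]; rewrite mulr0.
Qed.

Lemma ker_coord_onto y : exists a, (forall k, edge_sum a k = 0) /\ ker_coord a = y.
Proof.
pose c := extend0 even_enum (fun i => y 0 i).
exists (fun x => dsign x * c (croot x)); split.
  move=> k; rewrite /edge_sum croot_tgt -mulrDl dsign_edge.
  have [->|ok] := eqVneq (odd_sign k) 0; first by rewrite mulr0 mul0r.
  rewrite /c extend0_out ?mulr0 // => i; apply/eqP => ei.
  have := set_enum_mem card_even_roots i; rewrite ei !inE => /andP[_ /forallP/(_ k)].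
  by rewrite eqxx (negbTE ok).
apply/matrixP => i j; rewrite !mxE (ord1 i).
have := set_enum_mem card_even_roots j; rewrite !inE => /andP[/eqP rj _].
have /eqP d0 : depth (even_enum j) == 0%N by rewrite depth_eq0 rj.
by rewrite rj /dsign d0 mul1r /c extend0E //; apply: set_enum_inj.
Qed.

End IncidenceForest.

(** * Enhanced states of bidegree (i, v - 1) over A_2 *)

Section TopDegreeStates.
Variables (T : finType) (m : nat) (src tgt : 'I_m -> T).
Hypothesis src_neq_tgt : forall k, src k != tgt k.

Local Notation comps := (components src tgt).
Local Notation adjs s := (adj src tgt s).

Lemma connect_adj_equiv s : {in [set: T] & &, equivalence_rel (connect (adjs s))}.
Proof.
move=> x y z _ _ _; split=> [|xy]; first exact: connect0.
by apply: same_connect => //; apply: connect_adj_sym.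
Qed.

Lemma pblock_components s x : pblock (comps s) x = [set y | connect (adjs s) x y].
Proof.
apply/setP=> y; rewrite inE pblock_equivalence_partition ?in_setT //.
exact: connect_adj_equiv.
Qed.

Lemma pblock_mem_components s x : pblock (comps s) x \in comps s.
Proof.
have /and3P[/eqP cover_comps _ _] := equivalence_partitionP (connect_adj_equiv s).
by apply: pblock_mem; rewrite cover_comps in_setT.
Qed.

Lemma componentsE s : comps s = (fun x => [set y | connect (adjs s) x y]) @: [set: T].
Proof. by apply: eq_imset => x; apply/setP=> y; rewrite !inE. Qed.

Lemma connect_adj0 x y : connect (adjs set0) x y = (x == y).
Proof.
apply/idP/eqP => [|->]; last exact: connect0.
by case/connectP => -[|z p] //= /andP[/existsP[k]]; rewrite in_set0.
Qed.

Lemma components0 : comps set0 = set1 @: [set: T].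
Proof.
by rewrite componentsE; apply: eq_imset => x; apply/setP=> y; rewrite !inE connect_adj0 eq_sym.
Qed.

Lemma pblock_components0 x : pblock (comps set0) x = [set x].
Proof. by rewrite pblock_components; apply/setP=> y; rewrite !inE connect_adj0 eq_sym. Qed.

Definition ends k := [set src k; tgt k].

Lemma connect_adj1 k x y :
  connect (adjs [set k]) x y = (x == y) || (x \in ends k) && (y \in ends k).
Proof.
apply/idP/idP => [xy|].
  have ends_adj u v : adjs [set k] u v -> (u \in ends k) && (v \in ends k).
    case/existsP=> j /andP[]; rewrite inE => /eqP -> /orP[] /andP[/eqP <- /eqP <-];
    by rewrite !inE !eqxx ?orbT.
  have closed_ends : closed (adjs [set k]) (ends k) by move=> u v /ends_adj /andP[-> ->].
  rewrite -(closed_connect closed_ends xy) andbb.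
  case/connectP: xy => -[|z p] /= => [_ ->|/andP[/ends_adj /andP[-> _] _] _].
    by rewrite eqxx.
  by rewrite orbT.
case/orP => [/eqP <-|/andP[xk yk]]; first exact: connect0.
have [<-|xy] := eqVneq x y; first exact: connect0.
apply: connect1; apply/existsP; exists k; rewrite inE eqxx /=.
move: xk yk xy; rewrite !inE => /orP[]/eqP-> /orP[]/eqP->; rewrite ?eqxx ?orbT //.
Qed.

Lemma components1E k x :
  [set y | connect (adjs [set k]) x y] = if x \in ends k then ends k else [set x].
Proof.
apply/setP=> y; rewrite inE connect_adj1; case: ifP => xk /=.
  by apply/idP/idP => [/orP[/eqP <-|]|->] //; rewrite orbT.
by rewrite orbF inE eq_sym.
Qed.

Lemma components1P k X : X \in comps [set k] ->
  X = ends k \/ exists2 x, x \notin ends k & X = [set x].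
Proof.
rewrite componentsE => /imsetP[x _ ->]; rewrite components1E.
by case: ifP => xk; [left | right; exists x; rewrite ?xk].
Qed.

Lemma ends_mem_components1 k : ends k \in comps [set k].
Proof.
by rewrite componentsE; apply/imsetP; exists (src k); rewrite // components1E !inE eqxx.
Qed.

Lemma card_components1 k : #|comps [set k]| = (#|T| - 1)%N.
Proof.
pose comp x := [set y | connect (adjs [set k]) x y].
have -> : comps [set k] = comp @: ([set: T] :\ tgt k).
  rewrite componentsE; apply/setP=> C; apply/imsetP/imsetP => -[x xT ->]; last by exists x.
  have [->|xt] := eqVneq x (tgt k); last by exists x; rewrite // !inE xt.
  exists (src k); first by rewrite !inE src_neq_tgt.
  by rewrite /comp !components1E !inE !eqxx ?orbT.
rewrite card_in_imset; first by have := cardsD1 (tgt k) [set: T]; rewrite in_setT cardsT; lia.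
move=> x y; rewrite !inE /comp !components1E => /andP[xt _] /andP[yt _].
have ends_src z : z != tgt k -> (z \in ends k) = (z == src k).
  by move=> zt; rewrite !inE (negbTE zt) orbF.
rewrite !ends_src //; case: eqP => [->|_]; case: eqP => [->|_] //.
- by move/setP/(_ (tgt k)); rewrite !inE eqxx orbT eq_sym (negbTE yt).
- by move/setP/(_ (tgt k)); rewrite !inE eqxx orbT eq_sym (negbTE xt).
- by move/set1_inj.
Qed.

Local Notation state := (state src tgt 2).
Local Notation pstate := (pstate T m 2).

Definition vertex_weight u : {ffun {set T} -> 'I_2} :=
  [ffun X => if (X \in comps set0) && (X != [set u]) then ord_max else ord0].

Definition edge_weight k : {ffun {set T} -> 'I_2} :=
  [ffun X => if X \in comps [set k] then ord_max else ord0].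

Lemma vertex_weight_state u : is_state src tgt ((set0, vertex_weight u) : pstate).
Proof. by apply/forallP=> X; apply/implyP=> /negbTE nX; rewrite ffunE /= nX. Qed.

Lemma edge_weight_state k : is_state src tgt (([set k], edge_weight k) : pstate).
Proof. by apply/forallP=> X; apply/implyP=> /negbTE nX; rewrite ffunE /= nX. Qed.

Definition vertex_state u : state := Sub (set0, vertex_weight u) (vertex_weight_state u).
Definition edge_state k : state := Sub ([set k], edge_weight k) (edge_weight_state k).

Lemma set1_mem_components0 x : [set x] \in comps set0.
Proof. by rewrite components0; apply/imsetP; exists x. Qed.

Lemma vertex_weight1 u x : val (vertex_weight u [set x]) = (x != u) :> nat.
Proof. by rewrite ffunE set1_mem_components0 (inj_eq set1_inj); case: (x != u). Qed.

Lemma vertex_state_inj : injective vertex_state.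
Proof.
move=> u v /(congr1 (fun t : state => val ((val t).2 [set u]))) /=.
by rewrite !vertex_weight1 eqxx; case: eqP.
Qed.

Lemma edge_state_inj : injective edge_state.
Proof. by move=> k k' /(congr1 (fun t : state => (val t).1)) /set1_inj. Qed.

Lemma vertex_state_bideg u :
  deg_i (vertex_state u) = 0%N /\ (deg_j (vertex_state u))%:Z = #|T|%:Z - 1.
Proof.
split; first by rewrite /deg_i cards0.
rewrite /deg_j /= components0 big_imset /=; last by move=> x y _ _; apply: set1_inj.
under eq_bigr => x _ do rewrite vertex_weight1.
rewrite Posz_eq_subr1 (bigD1 u) ?in_setT //= eqxx add0n.
rewrite (eq_bigr (fun _ => 1%N)) => [|x /andP[_ ->]] //.
rewrite sum1_card [RHS](cardD1 u) inE add1n; congr _.+1.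
by apply: eq_card => x; rewrite -topredE /= in_setT !inE andbT.
Qed.

Lemma edge_state_bideg k :
  deg_i (edge_state k) = 1%N /\ (deg_j (edge_state k))%:Z = #|T|%:Z - 1.
Proof.
split; first by rewrite /deg_i cards1.
rewrite /deg_j /= (eq_bigr (fun _ => 1%N)) => [|X kX]; last by rewrite ffunE kX.
rewrite sum1_card card_components1 Posz_eq_subr1.
by rewrite subn1 prednK //; apply/card_gt0P; exists (src k).
Qed.

Lemma bideg0_vertex_state t :
  deg_i t = 0%N -> (deg_j t)%:Z = #|T|%:Z - 1 -> exists u, t = vertex_state u.
Proof.
case: t => [[s c] cs]; rewrite /deg_i /deg_j /= => /eqP; rewrite cards_eq0 => /eqP s0.
move: cs; rewrite s0 => cs /Posz_eq_subr1.
rewrite components0 big_imset /= => [sumc|]; last by move=> x y _ _; apply: set1_inj.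
have [u cu0] : exists u, val (c [set u]) = 0%N.
  case: (pickP (fun x => val (c [set x]) == 0%N)) => [u /eqP|none]; first by exists u.
  suff sumT : (\sum_(x in [set: T]) c [set x])%N = #|T|.
    by move: sumc; rewrite sumT => /eqP; rewrite eqn_leq ltnn.
  rewrite -cardsT -sum1_card; apply: eq_bigr => x _.
  by move: (none x) (leq_ord (c [set x])); case: (c [set x]) => -[|[|n]].
have c1 : forall x, x != u -> val (c [set x]) = 1%N.
  apply: sum_le1_eq_card => [x _|]; first exact: leq_ord.
  move: sumc; rewrite (bigD1 u) ?in_setT //= cu0 add0n => sumc.
  rewrite [RHS](_ : _ = #|T|.-1); last exact: cardC1.
  by rewrite -sumc /=; apply: eq_bigl => x; rewrite in_setT.
exists u; apply: val_inj; congr pair; apply/ffunP => X; rewrite ffunE.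
case: (boolP (X \in comps set0)) => X0 /=; apply: val_inj; last first.
  by move/forallP: cs => /(_ X); rewrite X0 => /eqP.
move: X0; rewrite components0 => /imsetP[x _ ->]; rewrite (inj_eq set1_inj).
by case: eqP => [->|/eqP /c1].
Qed.

Lemma bideg1_edge_state t :
  deg_i t = 1%N -> (deg_j t)%:Z = #|T|%:Z - 1 -> exists k, t = edge_state k.
Proof.
case: t => [[s c] cs]; rewrite /deg_i /deg_j /= => /eqP/cards1P[k sk].
move: cs; rewrite sk => cs /Posz_eq_subr1 sumc.
have c1 : forall X, X \in comps [set k] -> val (c X) = 1%N.
  apply: sum_le1_eq_card => [X _|]; first exact: leq_ord.
  by rewrite card_components1 -sumc subn1.
exists k; apply: val_inj; congr pair; apply/ffunP => X; rewrite ffunE.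
case: (boolP (X \in comps [set k])) => kX; apply: val_inj; first exact: c1.
by move/forallP: cs => /(_ X); rewrite kX => /eqP.
Qed.

Local Notation incident := (incident src tgt).
Local Notation de_target := (de_target src tgt).

Lemma de_target_vertex_state u k :
  de_target (val (vertex_state u)) k =
  if incident k u then Some (val (edge_state k)) else None.
Proof.
rewrite /de_target /= !pblock_components0 (inj_eq set1_inj) (negbTE (src_neq_tgt k)).
rewrite !vertex_weight1; case: ifP => ku; last first.
  have -> : ((src k != u) + (tgt k != u))%N = 2%N by move: ku; rewrite /incident; do 2!case: eqP.
  by case: insubP => [o _ o2|] //; have := ltn_ord o; rewrite o2.
have -> : ((src k != u) + (tgt k != u))%N = 1%N.
  by case/orP: ku (src_neq_tgt k) => /eqP <-; rewrite eqxx // eq_sym => /negbTE ->.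
case: (insubP (ordinal 2) 1%N) => [o _ o1|] //=; congr Some; rewrite setU0; congr pair.
apply/ffunP => X; rewrite !ffunE; apply: val_inj.
case: eqP => [->|Xk]; first by rewrite ends_mem_components1 o1.
case: ifP => // kX; have [Xe|[x xk ->]] := components1P kX; first by case: Xk.
rewrite set1_mem_components0 (inj_eq set1_inj) /=; case: eqP => // xu; move: xk; rewrite xu.
by case/orP: ku => /eqP <-; rewrite !inE eqxx ?orbT.
Qed.

Hypothesis ends_inj : injective ends.

Lemma ends_sub_eq k e : src e \in ends k -> tgt e \in ends k -> e = k.
Proof.
move=> se te; apply: ends_inj; move: se te (src_neq_tgt e); rewrite /ends !inE.
by case/orP=> /eqP-> /orP[]/eqP->; rewrite ?eqxx // setUC.
Qed.

Lemma de_target_edge_state k e : e != k -> de_target (val (edge_state k)) e = None.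
Proof.
move=> ek; rewrite /de_target /=.
have -> : (pblock (comps [set k]) (src e) == pblock (comps [set k]) (tgt e)) = false.
  apply/negbTE/negP => /eqP same.
  have : tgt e \in pblock (comps [set k]) (src e) by rewrite same pblock_components inE connect0.
  rewrite pblock_components inE connect_adj1 (negbTE (src_neq_tgt e)) /= => /andP[se te].
  by move: ek; rewrite (ends_sub_eq se te) eqxx.
rewrite !ffunE !pblock_mem_components.
by case: insubP => [o _ o2|] //; have := ltn_ord o; rewrite o2.
Qed.

Lemma dbasis_edge_state k : dbasis (edge_state k) = 0.
Proof.
rewrite /dbasis big1 // => e; rewrite !inE => ek.
by rewrite /d_e de_target_edge_state // mul0rz.
Qed.

Lemma dbasis_vertex_state u : dbasis (vertex_state u) =
  \sum_k (if incident k u then [ffun w => (w == edge_state k)%:Z] else 0).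
Proof.
rewrite /dbasis; apply: eq_big => [k|k _]; first by rewrite !inE.
have -> : #|[set f in (val (vertex_state u)).1 | (f < k)%N]| = 0%N.
  by apply/eqP; rewrite cards_eq0; apply/eqP/setP => f; rewrite !inE.
by rewrite expr0 mulr1z /d_e de_target_vertex_state; case: ifP.
Qed.

Local Notation chain := {ffun state -> int}.
Local Notation top := (#|T|%:Z - 1).

Definition vertex_chain (a : T -> int) : chain := [ffun t => extend0 vertex_state a t].
Definition edge_chain (b : 'I_m -> int) : chain := [ffun t => extend0 edge_state b t].

Lemma vertex_chainE a u : vertex_chain a (vertex_state u) = a u.
Proof. by rewrite ffunE extend0E //; apply: vertex_state_inj. Qed.

Lemma edge_chainE b k : edge_chain b (edge_state k) = b k.
Proof. by rewrite ffunE extend0E //; apply: edge_state_inj. Qed.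

Lemma eq_edge_chain b b' : b =1 b' -> edge_chain b = edge_chain b'.
Proof. by move=> eqb; apply/ffunP => t; rewrite !ffunE /extend0; case: pickP. Qed.

Lemma vertex_chain_bideg a : in_bideg 0 top (vertex_chain a).
Proof. by move=> t; rewrite ffunE => /extend0_supp[u <-]; apply: vertex_state_bideg. Qed.

Lemma edge_chain_bideg b : in_bideg 1 top (edge_chain b).
Proof. by move=> t; rewrite ffunE => /extend0_supp[k <-]; apply: edge_state_bideg. Qed.

Lemma bideg0_vertex_chain (f : chain) :
  in_bideg 0 top f -> f = vertex_chain (fun u => f (vertex_state u)).
Proof.
move=> fb; apply/ffunP => t; rewrite ffunE; apply: (extend0_restrict vertex_state_inj).
by move=> {}t /fb[d0 dj]; have [u ->] := bideg0_vertex_state d0 dj; exists u.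
Qed.

Lemma bideg1_edge_chain (f : chain) :
  in_bideg 1 top f -> f = edge_chain (fun k => f (edge_state k)).
Proof.
move=> fb; apply/ffunP => t; rewrite ffunE; apply: (extend0_restrict edge_state_inj).
by move=> {}t /fb[d1 dj]; have [k ->] := bideg1_edge_state d1 dj; exists k.
Qed.

Lemma diff_edge_chain b : diff (edge_chain b) = 0.
Proof.
rewrite /diff big1 // => t _; rewrite ffunE.
have [/extend0_supp[k <-]|/negPn/eqP ->] := boolP (extend0 edge_state b t != 0).
  by rewrite dbasis_edge_state mul0rz.
by rewrite mulr0z.
Qed.

Lemma sum_incident (F : T -> int) k :
  \sum_u (if incident k u then F u else 0) = F (src k) + F (tgt k).
Proof.
rewrite (bigD1 (src k)) //= /incident eqxx (bigD1 (tgt k)) /=; last by rewrite eq_sym src_neq_tgt.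
rewrite eqxx orbT big1 ?addr0 // => x /andP[xs xt].
by rewrite ![_ == x]eq_sym (negbTE xs) (negbTE xt).
Qed.

Lemma diff_vertex_chain a : diff (vertex_chain a) = edge_chain (edge_sum src tgt a).
Proof.
apply/ffunP => w; rewrite /diff sum_ffunE ffunE -sum_delta_extend0; last exact: edge_state_inj.
rewrite (reindex_supp vertex_state_inj) => [|t]; last first.
  rewrite ffunMzE ffunE.
  have [/extend0_supp //|/negPn/eqP ->] := boolP (extend0 vertex_state a t != 0).
  by rewrite mulr0z eqxx.
under eq_bigr => u _ do
  rewrite ffunMzE vertex_chainE dbasis_vertex_state sum_ffunE mulrzz mulr_suml.
rewrite exchange_big /=; apply: eq_bigr => k _.
rewrite /edge_sum -sum_incident mulr_sumr; apply: eq_bigr => u _.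
by case: ifP; rewrite ffunE ?mulr0 ?mul0r // natz.
Qed.

Lemma diff0 : diff (0 : chain) = 0.
Proof. by rewrite /diff big1 // => t _; rewrite ffunE mulr0z. Qed.

Lemma coboundary0E (f : chain) : coboundary 0 top f <-> f = 0.
Proof.
split=> [[g [gdeg ->]]|->]; last by exists 0; split=> [t|]; rewrite ?diff0 // ffunE eqxx.
suff -> : g = 0 by apply: diff0.
by apply/ffunP => t; rewrite ffunE; apply/eqP; apply: contraT => /gdeg[].
Qed.

Lemma coboundary1E (f : chain) :
  coboundary 1 top f <-> exists a, f = edge_chain (edge_sum src tgt a).
Proof.
split=> [[g [gdeg ->]]|[a ->]]; last first.
  by exists (vertex_chain a); split=> [t /vertex_chain_bideg[-> ->]|]; rewrite ?diff_vertex_chain.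
have /bideg0_vertex_chain -> : in_bideg 0 top g by move=> t /gdeg[/succn_inj].
by rewrite diff_vertex_chain; eexists.
Qed.

Lemma diff_vertex_chain_eq0 a :
  diff (vertex_chain a) = 0 <-> forall k, edge_sum src tgt a k = 0.
Proof.
rewrite diff_vertex_chain; split=> [a0 k|a0]; first by rewrite -edge_chainE a0 ffunE.
by apply/ffunP => t; rewrite !ffunE /extend0; case: pickP.
Qed.

Lemma cohom0_top : cohom_iso src tgt 2 0 top 'rV[int]_(p0bi src tgt).
Proof.
pose phi (f : chain) := ker_coord src tgt (fun u => f (vertex_state u)).
have phi_vertex_chain a : phi (vertex_chain a) = ker_coord src tgt a.
  by apply/matrixP => i j; rewrite !mxE vertex_chainE.
exists phi; split.
- by move=> f g _ _; apply/matrixP => i j; rewrite !mxE !ffunE.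
- move=> y; have [a [a_cyc <-]] := ker_coord_onto y.
  exists (vertex_chain a); split=> //; split; first exact: vertex_chain_bideg.
  exact/diff_vertex_chain_eq0.
move=> f [fb]; rewrite coboundary0E (bideg0_vertex_chain fb) => /diff_vertex_chain_eq0 f_cyc.
rewrite phi_vertex_chain; split=> [phi0|f0]; last first.
  by apply/matrixP => i j; rewrite !mxE -(vertex_chainE (fun u => f (vertex_state u))) f0 ffunE.
have f0 := ker_coord_eq0 f_cyc phi0.
by apply/ffunP => t; rewrite !ffunE /extend0; case: pickP => // u _; apply: f0.
Qed.

Lemma cohom1_top : cohom_iso src tgt 2 1 top
    ('rV[int]_(p1 src tgt - (p0 src tgt - p0bi src tgt)) *
     'rV['Z_2]_(p0 src tgt - p0bi src tgt))%type.
Proof.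
pose phi (f : chain) := coker_coord src_neq_tgt (fun k => f (edge_state k)).
have phi_edge_chain b : phi (edge_chain b) = coker_coord src_neq_tgt b.
  by apply: eq_coker_coord => k; rewrite edge_chainE.
exists phi; split.
- by move=> f g _ _; rewrite -coker_coordD; apply: eq_coker_coord => k; rewrite ffunE.
- move=> y; have [b <-] := coker_coord_onto src_neq_tgt y.
  exists (edge_chain b); split=> //; split; [exact: edge_chain_bideg | exact: diff_edge_chain].
move=> f [fb _]; rewrite coboundary1E (bideg1_edge_chain fb) phi_edge_chain.
split=> [/coker_coord_eq0[a ba]|[a /(congr1 phi)]]; first by exists a; apply: eq_edge_chain.
by rewrite !phi_edge_chain coker_coord_edge_sum.
Qed.

End TopDegreeStates.

Theorem theorem3p1 (T : finType) (m : nat) (src tgt : 'I_m -> T)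
  (Hloop : forall k, src k != tgt k)
  (Hsimple : injective (fun k => [set src k; tgt k])) :
  cohom_iso src tgt 2 0 (#|T|%:Z - 1) 'rV[int]_(p0bi src tgt) /\
  cohom_iso src tgt 2 1 (#|T|%:Z - 1)
    ('rV[int]_(p1 src tgt - (p0 src tgt - p0bi src tgt)) *
     'rV['Z_2]_(p0 src tgt - p0bi src tgt))%type.
Proof. by split; [apply: cohom0_top | apply: cohom1_top]. Qed.
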